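(* Let $n\ge 2$ and $0=x_0<x_1<\dots<x_n<x_{n+1}=1$. Let $\hat F_n(x)=\frac1n\#\{i\in\{1,\dots,n\}: x_i\le x\}$ for $x\in[0,1]$, so $\hat F_n(x)=\frac{i-1}{n}$ for $x\in[x_{i-1},x_i)$, $i=1,\dots,n+1$, and $\hat F_n(1)=1$. Set $p_1=0$, $p_i=\frac1n$ for $i=2,\dots,n+1$, $\delta_1=\frac{n-1}{n^2}$, $\delta_i=-\frac1{n^2}$ for $i=2,\dots,n$, and define for $u\in\mathcal{F}([0,1])$ $$T_pu(x)=p_iu(x)+\sum_{j=1}^{i-1}p_j+\sum_{j=1}^{i-1}\delta_j\quad\text{for }x\in[x_{i-1},x_i),\ i=1,\dots,n+1,$$ with the last interval taken as $[x_n,1]$. Then $T_p$ maps $\mathcal{F}([0,1])$ into itself, $T_p\hat F_n=\hat F_n$, and for every $u\in\mathcal{F}([0,1])$, $d_{sup}(T_p^{s}u,\hat F_n)\to 0$ as $s\to\infty$, where $T_p^s$ denotes the $s$-fold iterate.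
   Context: $\mathcal{F}([0,1])$ denotes the set of distribution functions on $[0,1]$, i.e. functions $F:[0,1]\to[0,1]$ that are non-decreasing, right-continuous, with $F(0)=0$ and $F(1)=1$; $d_{sup}(F,G)=\sup_{x\in[0,1]}|F(x)-G(x)|$. *)

From HB Require Import structures.
From mathcomp Require Import all_boot all_order all_algebra.
From mathcomp Require Import all_classical all_reals all_analysis.
Set Implicit Arguments. Unset Strict Implicit. Unset Printing Implicit Defensive.
Import Order.TTheory GRing.Theory Num.Theory.
Import numFieldNormedType.Exports.
Local Open Scope classical_set_scope.
Local Open Scope ring_scope.

(* Distribution functions on [0,1]; only the values on [0,1] matter. *)
Definition isDF {R : realType} (F : R -> R) : Prop :=
  [/\ (forall t, 0 <= t <= 1 -> 0 <= F t <= 1),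
      (forall s t, 0 <= s -> s <= t -> t <= 1 -> F s <= F t),
      (forall t, 0 <= t < 1 -> forall e : R, 0 < e ->
          exists2 d : R, 0 < d & forall y, t <= y < t + d -> y <= 1 ->
             `|F y - F t| < e),
      F 0 = 0 & F 1 = 1].

Definition dsup {R : realType} (F G : R -> R) : R :=
  sup [set `|F t - G t| | t in [set t : R | 0 <= t <= 1]].

Definition Fhat {R : realType} (n : nat) (x : nat -> R) (t : R) : R :=
  \sum_(1 <= i < n.+1) (if x i <= t then 1 else 0) / n%:R.

Definition pw {R : realType} (n i : nat) : R :=
  if i == 1%N then 0 else 1 / n%:R.
Definition dl {R : realType} (n i : nat) : R :=
  if i == 1%N then (n%:R - 1) / (n%:R ^+ 2) else - (1 / (n%:R ^+ 2)).

Definition in_piece {R : realType} (n : nat) (x : nat -> R) (i : nat) (t : R) : bool :=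
  if i == n.+1 then (x n <= t) && (t <= 1) else (x i.-1 <= t) && (t < x i).

Definition Tp {R : realType} (n : nat) (x : nat -> R) (u : R -> R) (t : R) : R :=
  \sum_(1 <= i < n.+2)
     (if in_piece n x i t
      then pw n i * u t + \sum_(1 <= j < i) pw n j + \sum_(1 <= j < i) dl n j
      else 0).

From HB Require Import structures.
From mathcomp Require Import all_boot all_order all_algebra.
From mathcomp Require Import all_classical all_reals all_analysis.
From mathcomp Require Import ring lra zify.
Import Order.TTheory GRing.Theory Num.Theory.
Import numFieldNormedType.Exports.
Local Open Scope classical_set_scope.
Local Open Scope ring_scope.
Set Implicit Arguments. Unset Strict Implicit.

(* On the i-th piece [x_{i-1}, x_i) the map T_p is the affine map
   v |-> p_i v + c_i applied to u t, with c_{k+1} = k (n-1)/n^2.  Its fixed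
   point is (i-1)/n, the value of the empirical distribution function there,
   so T_p^s u - F_n = p_i^s (u - F_n) pointwise.  Since p_1 = 0 and
   p_i = 1/n otherwise, d_sup(T_p^s u, F_n) <= n^-s. *)

Definition Tp_offset {R : realType} (n i : nat) : R :=
  \sum_(1 <= j < i) pw n j + \sum_(1 <= j < i) dl n j.

Definition Tpiece {R : realType} (n i : nat) (v : R) : R :=
  pw n i * v + Tp_offset n i.

Section Pieces.
Variables (R : realType) (n : nat) (x : nat -> R).
Hypothesis hinc : forall i : nat, (i <= n)%N -> x i < x i.+1.

Lemma ltr_x a b : (a < b)%N -> (b <= n.+1)%N -> x a < x b.
Proof.
elim: b => // b IH; rewrite ltnS leq_eqVlt => /orP [/eqP -> hb|hab hb].
  exact: hinc.
exact: lt_trans (IH hab (ltnW hb)) (hinc hb).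
Qed.

Lemma ler_x a b : (a <= b)%N -> (b <= n.+1)%N -> x a <= x b.
Proof.
by rewrite leq_eqVlt => /orP [/eqP -> //|hab hb]; rewrite ltW // ltr_x.
Qed.

Lemma in_piece_ge i t : in_piece n x i t -> x i.-1 <= t.
Proof. by rewrite /in_piece; case: eqP => [-> /andP []|_ /andP []]. Qed.

Lemma in_piece_lt i t : in_piece n x i t -> (i <= n)%N -> t < x i.
Proof. by rewrite /in_piece; case: eqP => [-> _|_ /andP [] //]; rewrite ltnn. Qed.

Lemma in_piece_exists (hx0 : x 0%N = 0) t :
  0 <= t -> t <= 1 -> exists2 i, (0 < i <= n.+1)%N & in_piece n x i t.
Proof.
move=> t0 t1.
suff from_k : forall k, (k <= n)%N -> x (n - k)%N <= t ->
    exists2 i, (0 < i <= n.+1)%N & in_piece n x i t.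
  by apply: (from_k n (leqnn n)); rewrite subnn hx0.
elim=> [|k IH] hk hxt.
  by exists n.+1; rewrite ?leqnn // /in_piece eqxx -{1}(subn0 n) hxt t1.
have [h|h] := leP (x (n - k)%N) t; first exact: IH (ltnW hk) h.
exists (n - k)%N; first lia.
rewrite /in_piece ifF; last by apply/eqP; lia.
have -> : (n - k).-1 = (n - k.+1)%N by lia.
by rewrite hxt h.
Qed.

Lemma in_piece_mono i j s t : (i <= n.+1)%N -> s <= t ->
  in_piece n x i s -> in_piece n x j t -> (i <= j)%N.
Proof.
move=> hi st pis pjt; rewrite leqNgt; apply/negP => ji.
have : x j <= x i.-1 by apply: ler_x; lia.
rewrite leNgt => /negP; apply.
apply: le_lt_trans (le_trans (in_piece_ge pis) st) (in_piece_lt pjt _); lia.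
Qed.

Lemma in_piece_uniq i j t : (i <= n.+1)%N -> (j <= n.+1)%N ->
  in_piece n x i t -> in_piece n x j t -> i = j.
Proof.
move=> hi hj pi pj; apply/eqP; rewrite eqn_leq.
by rewrite (in_piece_mono hi (lexx t) pi pj) (in_piece_mono hj (lexx t) pj pi).
Qed.

Lemma TpE u i t : (0 < i <= n.+1)%N -> in_piece n x i t ->
  Tp n x u t = Tpiece n i (u t).
Proof.
move=> hi pi; rewrite /Tp (bigD1_seq i) ?iota_uniq //=; last by rewrite mem_index_iota; lia.
rewrite pi [X in _ + X = _]big1_seq ?addr0 /Tpiece /Tp_offset ?addrA // => j /andP [ji].
rewrite mem_index_iota => hj; case: ifP => // pj.
by move/eqP: ji; case; apply: in_piece_uniq => //; lia.
Qed.

Lemma FhatE i t : (0 < i <= n.+1)%N -> in_piece n x i t ->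
  Fhat n x t = (i.-1)%:R / n%:R.
Proof.
move=> hi pi; have /andP [i0 hin] := hi.
rewrite /Fhat (@big_cat_nat _ _ _ i) //=.
rewrite (@eq_big_nat _ _ _ 1 i _ (fun _ => 1 / n%:R)); last first.
  move=> k hk; rewrite ifT //.
  by apply: le_trans (in_piece_ge pi); apply: ler_x; lia.
rewrite (@eq_big_nat _ _ _ i n.+1 _ (fun _ => 0)); last first.
  move=> k hk; rewrite ifF ?mul0r //; apply/negbTE; rewrite -ltNge.
  by apply: lt_le_trans (in_piece_lt pi _) (ler_x _ _); lia.
by rewrite !sumr_const_nat mul0rn addr0 subn1 -[LHS]mulr_natl mulrA mulr1.
Qed.

End Pieces.

Section AffinePieces.
Variables (R : realType) (n : nat).
Hypothesis hn : (2 <= n)%N.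

Let n_ge2 : 2 <= n%:R :> R.
Proof. by rewrite (ler_nat R 2). Qed.

Let n_neq0 : n%:R != 0 :> R.
Proof. by rewrite pnatr_eq0 -lt0n (leq_trans _ hn). Qed.

Lemma Tp_offsetE k : Tp_offset n k.+1 = k%:R * (n%:R - 1) / n%:R ^+ 2 :> R.
Proof.
elim: k => [|k IH]; first by rewrite /Tp_offset !big_geq // addr0 !mul0r.
rewrite /Tp_offset !(big_nat_recr k.+1) //= addrACA -/(Tp_offset n k.+1) IH.
rewrite /pw /dl; case: k {IH} => [|k] /=; first by rewrite add0r !mul0r add0r mul1r.
by rewrite -[k.+2%:R]natr1; field.
Qed.

Lemma normr_pw i : `|pw n i| <= 1 / n%:R :> R.
Proof.
have n2 := n_ge2; have inv_ge0 : 0 <= 1 / n%:R :> R by rewrite divr_ge0 //; lra.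
by rewrite /pw; case: ifP => _; rewrite ?normr0 ?ger0_norm.
Qed.

Lemma TpieceB i (v w : R) : Tpiece n i v - Tpiece n i w = pw n i * (v - w).
Proof. by rewrite /Tpiece; ring. Qed.

Lemma Tpiece_fix k : Tpiece n k.+1 (k%:R / n%:R) = k%:R / n%:R :> R.
Proof.
rewrite /Tpiece Tp_offsetE /pw; case: (k =P 0%N) => [->|k0].
  by rewrite !mul0r add0r.
rewrite ifF; last by apply/eqP; lia.
by field.
Qed.

Lemma Tpiece_ge0_le1 i (v : R) : (0 < i <= n.+1)%N -> 0 <= v <= 1 ->
  0 <= Tpiece n i v <= 1.
Proof.
case: i => // k /andP [_ hk] /andP [v0 v1]; have n2 := n_ge2.
rewrite /Tpiece Tp_offsetE /pw; case: (k =P 0%N) => [->|k0].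
  by rewrite !mul0r add0r lexx ler01.
have kn : k%:R <= n%:R :> R by rewrite ler_nat.
have c0 : 0 <= k%:R * (n%:R - 1) / n%:R ^+ 2 :> R.
  by rewrite divr_ge0 ?exprn_ge0 ?mulr_ge0 //; lra.
have c1 : k%:R * (n%:R - 1) / n%:R ^+ 2 <= 1 - 1 / n%:R :> R.
  have -> : 1 - 1 / n%:R = n%:R * (n%:R - 1) / n%:R ^+ 2 :> R by field; lra.
  by rewrite ler_wpM2r ?invr_ge0 ?exprn_ge0 ?ler_wpM2r //; lra.
have p0 : 0 <= 1 / n%:R * v :> R by rewrite mulr_ge0 ?divr_ge0 //; lra.
have p1 : 1 / n%:R * v <= 1 / n%:R :> R by rewrite ler_piMr ?divr_ge0 //; lra.
by rewrite ifF; [apply/andP; split; lra | apply/eqP; lia].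
Qed.

Lemma ler_Tpiece i j (v w : R) : (0 < i)%N -> (i <= j <= n.+1)%N ->
  0 <= v -> v <= w -> w <= 1 -> Tpiece n i v <= Tpiece n j w.
Proof.
move=> i0 /andP [ij hj] v0 vw w1; have n2 := n_ge2.
have /andP [Tw0 _] : 0 <= Tpiece n j w <= 1.
  by apply: Tpiece_ge0_le1; [lia | rewrite (le_trans v0 vw)].
case: (i =P 1%N) => [-> | i1]; first by rewrite /Tpiece /pw eqxx mul0r add0r Tp_offsetE !mul0r.
rewrite /Tpiece /pw (introF eqP i1) ifF; last by apply/eqP; lia.
apply: lerD; first by rewrite ler_wpM2l ?divr_ge0 //; lra.
case: i i0 ij i1 => // k _; case: j hj {Tw0} => // m _ km _.
rewrite !Tp_offsetE ler_wpM2r ?invr_ge0 ?exprn_ge0 ?ler_wpM2r ?ler_nat //; lra.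
Qed.

End AffinePieces.

Section Tp.
Variables (R : realType) (n : nat) (x : nat -> R).
Hypotheses (hn : (2 <= n)%N) (hx0 : x 0%N = 0) (hx1 : x n.+1 = 1).
Hypothesis hinc : forall i : nat, (i <= n)%N -> x i < x i.+1.

Let n_gt0 : 0 < n%:R :> R.
Proof. by rewrite ltr0n; lia. Qed.

Lemma Tp_right_continuous u : isDF u ->
  forall t, 0 <= t < 1 -> forall e : R, 0 < e ->
  exists2 d : R, 0 < d & forall y, t <= y < t + d -> y <= 1 ->
    `|Tp n x u y - Tp n x u t| < e.
Proof.
case=> _ _ urc _ _ t /andP [t0 t1] e e0.
have [i hi pi] := in_piece_exists n hx0 t0 (ltW t1).
have [d d0 hd] := urc t (ltac:(by apply/andP)) e e0.
have same_piece y : in_piece n x i y -> t <= y < t + d -> y <= 1 ->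
    `|Tp n x u y - Tp n x u t| < e.
  move=> py hy y1; rewrite (TpE hinc _ hi pi) (TpE hinc _ hi py) TpieceB normrM.
  apply: le_lt_trans (hd y hy y1); apply: ler_piMl => //.
  by apply: le_trans (normr_pw R hn i) _; rewrite ler_pdivrMr // mul1r ler1n; lia.
case: (i =P n.+1) => [ei | ni].
  exists d => // y /andP [ty yd] y1; apply: same_piece => //; last exact/andP.
  move: pi; rewrite ei /in_piece eqxx y1 andbT => /andP [xt _].
  exact: le_trans ty.
have xt := in_piece_lt pi (ltac:(lia)).
exists (Num.min d (x i - t)); first by rewrite lt_min d0 subr_gt0 xt.
move=> y /andP [ty]; rewrite -ltrBlDl lt_min => /andP [yd yx] y1.
apply: same_piece => //; last by rewrite ty /=; lra.
by rewrite /in_piece (introF eqP ni) (le_trans (in_piece_ge pi) ty) /=; lra.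
Qed.

Lemma Tp_isDF u : isDF u -> isDF (Tp n x u).
Proof.
move=> uDF; have [ub umono _ u0 u1] := uDF.
split.
- move=> t /andP [t0 t1]; have [i hi pi] := in_piece_exists n hx0 t0 t1.
  by rewrite (TpE hinc u hi pi) Tpiece_ge0_le1 // ub ?t0.
- move=> s t s0 st t1.
  have [i hi pi] := in_piece_exists n hx0 s0 (le_trans st t1).
  have [j hj pj] := in_piece_exists n hx0 (le_trans s0 st) t1.
  rewrite (TpE hinc u hi pi) (TpE hinc u hj pj).
  have /andP [us0 _] := ub s (ltac:(by rewrite s0 (le_trans st t1))).
  have /andP [_ ut1] := ub t (ltac:(by rewrite (le_trans s0 st) t1)).
  have ij : (i <= j)%N by apply: (in_piece_mono hinc (andP hi).2 st pi pj).
  by apply: ler_Tpiece => //; [lia | lia | exact: umono].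
- exact: Tp_right_continuous uDF.
- have p1 : in_piece n x 1 0.
    by rewrite /in_piece ifF ?hx0 ?lexx -?hx0 ?hinc //; apply/eqP; lia.
  by rewrite (TpE hinc u _ p1) // /Tpiece /pw eqxx mul0r add0r Tp_offsetE // !mul0r.
- have pn : in_piece n x n.+1 1.
    by rewrite /in_piece eqxx lexx andbT -hx1 ltW ?hinc.
  rewrite (TpE hinc u _ pn) ?leqnn // u1 /Tpiece Tp_offsetE // /pw ifF.
    by field; apply/lt0r_neq0.
  by apply/eqP; lia.
Qed.

Lemma Tp_Fhat t : 0 <= t <= 1 -> Tp n x (Fhat n x) t = Fhat n x t.
Proof.
move=> /andP [t0 t1]; have [i hi pi] := in_piece_exists n hx0 t0 t1.
rewrite (TpE hinc _ hi pi) (FhatE hinc hi pi).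
by case: i hi pi => // k _ _; rewrite Tpiece_fix.
Qed.

Lemma Fhat_ge0_le1 t : 0 <= t <= 1 -> 0 <= Fhat n x t <= 1.
Proof.
move=> /andP [t0 t1]; have [i hi pi] := in_piece_exists n hx0 t0 t1.
have : i.-1%:R <= n%:R :> R by rewrite ler_nat; lia.
by rewrite (FhatE hinc hi pi) divr_ge0 //= ler_pdivrMr // mul1r.
Qed.

Lemma iter_Tp_subFhat u s i t : 0 <= t <= 1 ->
  (0 < i <= n.+1)%N -> in_piece n x i t ->
  iter s (Tp n x) u t - Fhat n x t = pw n i ^+ s * (u t - Fhat n x t).
Proof.
move=> ht hi pi; elim: s => [|s IH] /=; first by rewrite expr0 mul1r.
have fix_t := Tp_Fhat ht; rewrite (TpE hinc _ hi pi) in fix_t.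
by rewrite (TpE hinc _ hi pi) -{1}fix_t TpieceB IH exprS mulrA.
Qed.

Lemma iter_Tp_dist_le u s t : isDF u -> 0 <= t <= 1 ->
  `|iter s (Tp n x) u t - Fhat n x t| <= (1 / n%:R) ^+ s.
Proof.
move=> [ub _ _ _ _] ht; have [t0 t1] := andP ht.
have [i hi pi] := in_piece_exists n hx0 t0 t1.
rewrite (iter_Tp_subFhat _ _ ht hi pi) normrM normrX -[leRHS]mulr1.
have /andP [a0 a1] := ub t ht; have /andP [b0 b1] := Fhat_ge0_le1 ht.
have inv_ge0 : 0 <= 1 / n%:R :> R by rewrite divr_ge0 // ltW.
rewrite ler_pM ?exprn_ge0 ?lerXn2r ?normr_pw ?nnegrE //.
by rewrite ler_norml; apply/andP; split; lra.
Qed.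

End Tp.

Lemma dsup_ge0_le (R : realType) (F G : R -> R) (c : R) :
  (forall t, 0 <= t <= 1 -> `|F t - G t| <= c) -> 0 <= dsup F G <= c.
Proof.
move=> hc; have t01 : 0 <= (0 : R) <= 1 by rewrite lexx ler01.
have ne : [set `|F t - G t| | t in [set t : R | 0 <= t <= 1]] !=set0.
  by exists `|F 0 - G 0|, 0.
apply/andP; split; last by apply: ge_sup => // _ [t ht <-]; exact: hc.
apply: le_trans (normr_ge0 (F 0 - G 0)) _; apply: ub_le_sup; last by exists 0.
by exists c => _ [t ht <-]; exact: hc.
Qed.

Unset Implicit Arguments.

Theorem mainTheorem8 (R : realType) (n : nat) (hn : (2 <= n)%N)
  (x : nat -> R) (hx0 : x 0%N = 0) (hx1 : x n.+1 = 1)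
  (hinc : forall i : nat, (i <= n)%N -> x i < x i.+1) :
  (forall u : R -> R, isDF u -> isDF (Tp n x u)) /\
  (forall t : R, 0 <= t <= 1 -> Tp n x (Fhat n x) t = Fhat n x t) /\
  (forall u : R -> R, isDF u ->
     (fun s : nat => dsup (iter s (Tp n x) u) (Fhat n x)) @ \oo --> (0 : R)).
Proof.
split; first exact: Tp_isDF.
split; first exact: Tp_Fhat.
move=> u uDF.
have n_gt1 : 1 < n%:R :> R by rewrite ltr1n.
apply: (@squeeze_cvgr _ _ _ _ (fun=> 0) (fun s => (1 / n%:R) ^+ s)).
- apply: nearW => s; apply: dsup_ge0_le => t ht.
  exact: iter_Tp_dist_le.
- exact: cvg_cst.
- apply: cvg_expr; rewrite ger0_norm ?divr_ge0 ?ltr_pdivrMr ?mul1r //; lra.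
Qed.
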